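(* Let $t$ be a term containing no ascription subterm, $\Gamma$ a typing context and $S$ a type. If $\Gamma\vdash^Z t:S$ is derivable in Zdancewic's type system, then there exists a type $S'$ with $S'<:S$ such that $\Gamma\vdash t:S'$ is derivable in the syntax-directed type system.
   Context: Fix a security lattice $(\mathsf{Label},\preccurlyeq)$ with join $\sqcup$, meet $\sqcap$, least element $\bot$ and greatest element $\top$; $\ell$ ranges over labels. Types: $S ::= \mathsf{Bool}_\ell \mid S \to_\ell S$. Terms: $t ::= x \mid b_\ell \mid (\lambda x{:}S.t)_\ell \mid t\,t \mid t \oplus t \mid \mathsf{if}\ t\ \mathsf{then}\ t\ \mathsf{else}\ t \mid t :: S$, with $b\in\{\mathsf{true},\mathsf{false}\}$ and $\oplus\in\{\wedge,\vee,\Rightarrow\}$. A typing context $\Gamma$ is a finite partial map from variables to types. Label stamping: $\mathsf{Bool}_\ell \sqcup \ell' = \mathsf{Bool}_{\ell\sqcup\ell'}$ and $(S_1\to_\ell S_2)\sqcup\ell' = S_1 \to_{\ell\sqcup\ell'} S_2$. Subtyping $<:$ is the least relation with: $\mathsf{Bool}_\ell <: \mathsf{Bool}_{\ell'}$ if $\ell\preccurlyeq\ell'$; $S_1\to_\ell S_2 <: S_1'\to_{\ell'}S_2'$ if $S_1'<:S_1$, $S_2<:S_2'$, $\ell\preccurlyeq\ell'$. Subtype join $\curlyvee$ and meet $\curlywedge$ are the partial functions defined mutually by: $\mathsf{Bool}_\ell \curlyvee \mathsf{Bool}_{\ell'}=\mathsf{Bool}_{\ell\sqcup\ell'}$, $(S_{11}\to_\ell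 S_{12})\curlyvee(S_{21}\to_{\ell'}S_{22}) = (S_{11}\curlywedge S_{21})\to_{\ell\sqcup\ell'}(S_{12}\curlyvee S_{22})$; $\mathsf{Bool}_\ell \curlywedge \mathsf{Bool}_{\ell'}=\mathsf{Bool}_{\ell\sqcap\ell'}$, $(S_{11}\to_\ell S_{12})\curlywedge(S_{21}\to_{\ell'}S_{22}) = (S_{11}\curlyvee S_{21})\to_{\ell\sqcap\ell'}(S_{12}\curlywedge S_{22})$; undefined otherwise (including when a recursive component is undefined). The syntax-directed system $\Gamma\vdash t:S$ has rules: (Sx) $\Gamma\vdash x:S$ if $x{:}S\in\Gamma$; (Sb) $\Gamma\vdash b_\ell:\mathsf{Bool}_\ell$; (S$\lambda$) from $\Gamma,x{:}S_1\vdash t:S_2$ infer $\Gamma\vdash(\lambda x{:}S_1.t)_\ell : S_1\to_\ell S_2$; (S$\oplus$) from $\Gamma\vdash t_1:\mathsf{Bool}_{\ell_1}$, $\Gamma\vdash t_2:\mathsf{Bool}_{\ell_2}$ infer $\Gamma\vdash t_1\oplus t_2:\mathsf{Bool}_{\ell_1\sqcup\ell_2}$; (Sapp) from $\Gamma\vdash t_1:S_{11}\to_\ell S_{12}$, $\Gamma\vdash t_2:S_2$, $S_2<:S_{11}$ infer $\Gamma\vdash t_1\,t_2 : S_{12}\sqcup\ell$; (Sif) from $\Gamma\vdash t:\mathsf{Bool}_\ell$, $\Gamma\vdash t_1:S_1$, $\Gamma\vdash t_2:S_2$ infer $\Gamma\vdash \mathsf{if}\ t\ \mathsf{then}\ t_1\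 \mathsf{else}\ t_2 : (S_1\curlyvee S_2)\sqcup\ell$ (when defined); (S::) from $\Gamma\vdash t:S_1$, $S_1<:S_2$ infer $\Gamma\vdash t::S_2 : S_2$. Zdancewic's system $\Gamma\vdash^Z t:S$ (for ascription-free terms) has the same rules (Sx), (Sb), (S$\lambda$), (S$\oplus$) (with $\vdash^Z$), plus: (Zapp) from $\Gamma\vdash^Z t_1:S_{11}\to_\ell S_{12}$ and $\Gamma\vdash^Z t_2 : S_{11}$ infer $\Gamma\vdash^Z t_1\,t_2 : S_{12}\sqcup\ell$; (Zif) from $\Gamma\vdash^Z t:\mathsf{Bool}_\ell$, $\Gamma\vdash^Z t_1 : S\sqcup\ell$, $\Gamma\vdash^Z t_2:S\sqcup\ell$ infer $\Gamma\vdash^Z\mathsf{if}\ t\ \mathsf{then}\ t_1\ \mathsf{else}\ t_2 : S\sqcup\ell$; (Zsub) from $\Gamma\vdash^Z t:S$ and $S<:S'$ infer $\Gamma\vdash^Z t:S'$. *)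

(* the security lattice is an arbitrary bounded lattice
   (tbLatticeType), with order <=, join `|`, meet `&`, \bot, \top. *)
From HB Require Import structures.
From mathcomp Require Import all_boot all_order.
Set Implicit Arguments.
Unset Strict Implicit.
Unset Printing Implicit Defensive.
Import Order.TTheory.
Local Open Scope order_scope.

Section Lang.
Context {disp : Order.disp_t} (L : tbLatticeType disp).

Inductive ty : Type :=
| TBool : L -> ty
| TArr  : ty -> L -> ty -> ty.

Inductive binop : Type := OAnd | OOr | OImp.

Inductive term : Type :=
| tvar  : nat -> term
| tbool : bool -> L -> term
| tlam  : nat -> ty -> term -> L -> term
| tapp  : term -> term -> term
| tbin  : binop -> term -> term -> term
| tif   : term -> term -> term -> term
| tasc  : term -> ty -> term.

Fixpoint asc_free (t : term) : Prop :=
  match t with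
  | tvar _ | tbool _ _ => True
  | tlam _ _ t _ => asc_free t
  | tapp t1 t2 | tbin _ t1 t2 => asc_free t1 /\ asc_free t2
  | tif t t1 t2 => asc_free t /\ asc_free t1 /\ asc_free t2
  | tasc _ _ => False
  end.

(* Typing contexts: finite partial maps, represented as association lists
   (later bindings shadow earlier ones). *)
Definition ctx := list (nat * ty).

Fixpoint lookup (G : ctx) (x : nat) : option ty :=
  match G with
  | nil => None
  | (y, U) :: G' => if x == y then Some U else lookup G' x
  end.

Definition extend (G : ctx) (x : nat) (S : ty) : ctx := (x, S) :: G.

Definition stamp (S : ty) (l : L) : ty :=
  match S with
  | TBool l' => TBool (l' `|` l)
  | TArr S1 l' S2 => TArr S1 (l' `|` l) S2
  end.

Inductive subty : ty -> ty -> Prop :=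
| sub_bool : forall l l', l <= l' -> subty (TBool l) (TBool l')
| sub_arr : forall S1 S2 S1' S2' l l',
    subty S1' S1 -> subty S2 S2' -> l <= l' ->
    subty (TArr S1 l S2) (TArr S1' l' S2').

Fixpoint tjm (b : bool) (S T : ty) : option ty :=
  match S, T with
  | TBool l, TBool l' => Some (TBool (if b then l `|` l' else l `&` l'))
  | TArr S11 l S12, TArr S21 l' S22 =>
      match tjm (~~ b) S11 S21, tjm b S12 S22 with
      | Some A, Some B => Some (TArr A (if b then l `|` l' else l `&` l') B)
      | _, _ => None
      end
  | _, _ => None
  end.

Definition tjoin := tjm true.
Definition tmeet := tjm false.

Inductive styped : ctx -> term -> ty -> Prop :=
| S_x : forall G x S, lookup G x = Some S -> styped G (tvar x) S
| S_b : forall G b l, styped G (tbool b l) (TBool l)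
| S_lam : forall G x S1 t S2 l,
    styped (extend G x S1) t S2 -> styped G (tlam x S1 t l) (TArr S1 l S2)
| S_op : forall G o t1 t2 l1 l2,
    styped G t1 (TBool l1) -> styped G t2 (TBool l2) ->
    styped G (tbin o t1 t2) (TBool (l1 `|` l2))
| S_app : forall G t1 t2 S11 S12 S2 l,
    styped G t1 (TArr S11 l S12) -> styped G t2 S2 -> subty S2 S11 ->
    styped G (tapp t1 t2) (stamp S12 l)
| S_if : forall G t t1 t2 l S1 S2 S,
    styped G t (TBool l) -> styped G t1 S1 -> styped G t2 S2 ->
    tjoin S1 S2 = Some S ->
    styped G (tif t t1 t2) (stamp S l)
| S_asc : forall G t S1 S2,
    styped G t S1 -> subty S1 S2 -> styped G (tasc t S2) S2.

Inductive ztyped : ctx -> term -> ty -> Prop :=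
| Z_x : forall G x S, lookup G x = Some S -> ztyped G (tvar x) S
| Z_b : forall G b l, ztyped G (tbool b l) (TBool l)
| Z_lam : forall G x S1 t S2 l,
    ztyped (extend G x S1) t S2 -> ztyped G (tlam x S1 t l) (TArr S1 l S2)
| Z_op : forall G o t1 t2 l1 l2,
    ztyped G t1 (TBool l1) -> ztyped G t2 (TBool l2) ->
    ztyped G (tbin o t1 t2) (TBool (l1 `|` l2))
| Z_app : forall G t1 t2 S11 S12 l,
    ztyped G t1 (TArr S11 l S12) -> ztyped G t2 S11 ->
    ztyped G (tapp t1 t2) (stamp S12 l)
| Z_if : forall G t t1 t2 l S,
    ztyped G t (TBool l) -> ztyped G t1 (stamp S l) -> ztyped G t2 (stamp S l) ->
    ztyped G (tif t t1 t2) (stamp S l)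
| Z_sub : forall G t S S', ztyped G t S -> subty S S' -> ztyped G t S'.

End Lang.

(* Subsumption is then
   absorbed by transitivity of [<:], application by contravariance in the
   domain, and the conditional by the fact that two subtypes of a common type
   have a subtype join below it. *)
From mathcomp Require Import all_boot all_order.
Import Order.TTheory.
Local Open Scope order_scope.

Section Subtyping.
Context {disp : Order.disp_t} {L : tbLatticeType disp}.
Implicit Types (S T U : ty L) (l : L).

Lemma subty_refl S : subty S S.
Proof. by elim: S => [l|A IHA l B IHB]; constructor. Qed.

Lemma subty_trans {S T U} : subty S T -> subty T U -> subty S U.
Proof.
elim: T S U => [l|A IHA l B IHB] S U HST HTU.
- inversion HST as [a b Hab|]; subst; inversion HTU as [c d Hcd|]; subst.
  by constructor; apply: le_trans Hab Hcd.
- inversion HST as [|A1 B1 A1' B1' a a' HA1 HB1 Ha]; subst.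
  inversion HTU as [|A2 B2 A2' B2' c c' HA2 HB2 Hc]; subst.
  constructor; [exact: IHA HA2 HA1 | exact: IHB HB1 HB2 | exact: le_trans Ha Hc].
Qed.

Lemma stamp_subty S T l l' : subty S T -> l <= l' -> subty (stamp S l) (stamp T l').
Proof.
by move=> HST Hl; inversion HST; subst => /=; constructor => //; apply: leU2.
Qed.

Lemma stamp_stamp S l l' : stamp (stamp S l) l' = stamp S (l `|` l').
Proof. by case: S => [a|A a B] /=; rewrite joinA. Qed.

Lemma stamp_subty_stamp S T l l' :
  subty S (stamp T l) -> l' <= l -> subty (stamp S l') (stamp T l).
Proof.
move=> HST Hl; rewrite -[X in stamp T X](join_l Hl) -stamp_stamp.
exact: stamp_subty HST (lexx l').
Qed.

(* [subty_dir b S T] orients [<:] as [tjm b] needs it: upper bounds for the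
   join ([b = true]), lower bounds for the meet. *)
Definition subty_dir (b : bool) S T := if b then subty S T else subty T S.

Lemma tjm_bounded b U S1 S2 : subty_dir b S1 U -> subty_dir b S2 U ->
  exists J, tjm b S1 S2 = Some J /\ subty_dir b J U.
Proof.
elim: U b S1 S2 => [u|U1 IH1 u U2 IH2] [] S1 S2 /= H1 H2.
- inversion H1; subst; inversion H2; subst.
  by eexists; split; [reflexivity | constructor; rewrite leUx; apply/andP].
- inversion H1; subst; inversion H2; subst.
  by eexists; split; [reflexivity | constructor; rewrite lexI; apply/andP].
- inversion H1 as [|A1 A2 B1 B2 a a' HA1 HA2 Ha]; subst.
  inversion H2 as [|C1 C2 D1 D2 c c' HC1 HC2 Hc]; subst => /=.
  have [M [-> HM]] := IH1 false A1 C1 HA1 HC1.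
  have [J [-> HJ]] := IH2 true A2 C2 HA2 HC2.
  by eexists; split; [reflexivity | constructor; rewrite // leUx; apply/andP].
- inversion H1 as [|A1 A2 B1 B2 a a' HA1 HA2 Ha]; subst.
  inversion H2 as [|C1 C2 D1 D2 c c' HC1 HC2 Hc]; subst => /=.
  have [J [-> HJ]] := IH1 true B1 D1 HA1 HC1.
  have [M [-> HM]] := IH2 false B2 D2 HA2 HC2.
  by eexists; split; [reflexivity | constructor; rewrite // lexI; apply/andP].
Qed.

Lemma tjoin_bounded {U S1 S2} : subty S1 U -> subty S2 U ->
  exists J, tjoin S1 S2 = Some J /\ subty J U.
Proof. exact: (tjm_bounded true). Qed.

End Subtyping.

Theorem proposition2 (disp : Order.disp_t) (L : tbLatticeType disp)
  (G : ctx L) (t : term L) (S : ty L) :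
  asc_free t -> ztyped G t S ->
  exists S' : ty L, subty S' S /\ styped G t S'.
Proof.
move=> _; elim => {G t S}.
- by move=> G x S Hx; exists S; split; [apply: subty_refl | apply: S_x].
- by move=> G b l; exists (TBool l); split; [apply: subty_refl | apply: S_b].
- move=> G x S1 t S2 l _ [S2' [HS2 Ht]]; exists (TArr S1 l S2').
  by split; [constructor; [apply: subty_refl | | apply: lexx] | apply: S_lam].
- move=> G o t1 t2 l1 l2 _ [A [HA Ht1]] _ [B [HB Ht2]].
  inversion HA as [a b Ha|]; subst; inversion HB as [c d Hc|]; subst.
  exists (TBool (a `|` c)); split; last exact: S_op.
  by constructor; apply: leU2.
- move=> G t1 t2 S11 S12 l _ [A [HA Ht1]] _ [B [HB Ht2]].
  inversion HA as [|A1 A2 B1 B2 a a' HA1 HA2 Ha]; subst.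
  exists (stamp A2 a); split; first exact: stamp_subty.
  by apply: S_app Ht1 Ht2 _; apply: subty_trans HB HA1.
- move=> G t t1 t2 l S _ [A [HA Ht]] _ [B [HB Ht1]] _ [C [HC Ht2]].
  inversion HA as [a b Ha|]; subst.
  have [J [HJ HJS]] := tjoin_bounded HB HC.
  exists (stamp J a); split; first exact: stamp_subty_stamp.
  exact: S_if Ht Ht1 Ht2 HJ.
- by move=> G t S S' _ [A [HA Ht]] HS; exists A; split; [apply: subty_trans HS|].
Qed.
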